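(* Let $\Omega\subset\mathbb{R}^n$ ($n\ge2$) be open, $\alpha\in[0,n]$ and $\mathcal{G}\in L^1(\Omega;\mathbb{R}^+)$. Suppose that for some $\lambda,\varrho>0$ and $\xi\in\Omega$ there is a point $z\in\Omega_\varrho(\xi)$ with $\mathbf{M}_\alpha\mathcal{G}(z)\le\lambda$. Then for all $\sigma>3^n$, $$d^\alpha_{\mathcal{G}}(\Omega_\varrho(\xi);\sigma\lambda)\le d^\alpha_{\chi_{B_{2\varrho}(\xi)}\mathcal{G}}(\Omega_\varrho(\xi);\sigma\lambda).$$
   Context: Functions on $\Omega$ are extended by zero outside $\Omega$. $B_\rho(x)$ is the open ball, $\Omega_\rho(x)=B_\rho(x)\cap\Omega$, $\chi_E$ the indicator of $E$. $\mathbf{M}_\alpha f(x)=\sup_{\rho>0}\rho^\alpha\fint_{B_\rho(x)}|f|$ and $d^\alpha_{h}(E;\lambda)=\mathcal{L}^n(\{x\in E:\mathbf{M}_\alpha h(x)>\lambda\})$. *)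

From HB Require Import structures.
From mathcomp Require Import all_boot all_order all_algebra.
From mathcomp Require Import all_classical all_reals all_analysis.
Set Implicit Arguments. Unset Strict Implicit. Unset Printing Implicit Defensive.
Import Order.TTheory GRing.Theory Num.Theory.
Import numFieldNormedType.Exports.
Local Open Scope classical_set_scope.
Local Open Scope ring_scope.

(* R^n is modelled as row vectors 'rV[R]_n ; coordinates x ord0 i. *)

Definition enorm (R : realType) (n : nat) (x : 'rV[R]_n) : R :=
  Num.sqrt (\sum_(i < n) (x ord0 i) ^+ 2).

Definition eball (R : realType) (n : nat) (x : 'rV[R]_n) (rho : R) : set 'rV[R]_n :=
  [set y | enorm (y - x) < rho].

Definition oball (R : realType) (n : nat) (Om : set 'rV[R]_n) (x : 'rV[R]_n) (rho : R)
  : set 'rV[R]_n := eball x rho `&` Om.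

Definition box (R : realType) (n : nat) (a b : 'rV[R]_n) : set 'rV[R]_n :=
  [set x | forall i : 'I_n, a ord0 i <= x ord0 i < b ord0 i].

Definition boxvol (R : realType) (n : nat) (a b : 'rV[R]_n) : R :=
  \prod_(i < n) Num.max (b ord0 i - a ord0 i) 0.

(* n-dimensional Lebesgue (outer) measure L^n: infimum of total volumes of
   countable covers by boxes.  On Lebesgue measurable sets this is the
   Lebesgue measure. *)
Definition leb (R : realType) (n : nat) (E : set 'rV[R]_n) : \bar R :=
  ereal_inf [set (\sum_(k <oo) ((boxvol (ab k).1 (ab k).2)%:E))%E
            | ab in [set ab : nat -> 'rV[R]_n * 'rV[R]_n |
                      E `<=` \bigcup_k box (ab k).1 (ab k).2]].

Definition leb_measurable (R : realType) (n : nat) (A : set 'rV[R]_n) : Prop :=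
  caratheodory_measurable (@leb R n) A.

Definition leb_measurable_fun (R : realType) (n : nat) (f : 'rV[R]_n -> R) : Prop :=
  forall t : R, leb_measurable [set x | t < f x].

(* Lebesgue integral over E of a nonnegative function g, via the layer-cake
   (Cavalieri) formula  int_E g dL^n = int_0^oo L^n({x in E : g x > t}) dt. *)
Definition lint (R : realType) (n : nat) (E : set 'rV[R]_n) (g : 'rV[R]_n -> R) : \bar R :=
  (\int[@lebesgue_measure R]_(t in `]0%R, +oo[%classic)
      leb [set x | E x /\ (t < g x)%R])%E.

(* G in L^1(Omega; R^+), G being extended by zero outside Omega. *)
Definition L1_nonneg (R : realType) (n : nat) (Om : set 'rV[R]_n) (G : 'rV[R]_n -> R) : Prop :=
  [/\ forall x, Om x -> (0 <= G x)%R,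
      forall x, ~ Om x -> G x = 0%R,
      leb_measurable_fun G
    & (lint Om (fun x => `|G x|%R) < +oo)%E].

Definition ball_avg (R : realType) (n : nat) (f : 'rV[R]_n -> R) (x : 'rV[R]_n) (rho : R)
  : \bar R :=
  (lint (eball x rho) (fun y => `|f y|%R) * ((fine (leb (eball x rho)))^-1)%:E)%E.

Definition Mfrac (R : realType) (n : nat) (alpha : R) (f : 'rV[R]_n -> R) (x : 'rV[R]_n)
  : \bar R :=
  ereal_sup [set ((rho `^ alpha)%:E * ball_avg f x rho)%E | rho in [set rho : R | 0 < rho]].

Definition dfun (R : realType) (n : nat) (alpha : R) (h : 'rV[R]_n -> R)
  (E : set 'rV[R]_n) (lam : R) : \bar R :=
  leb [set x | E x /\ (lam%:E < Mfrac alpha h x)%E].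

From HB Require Import structures.
From mathcomp Require Import all_boot all_order all_algebra.
From mathcomp Require Import all_classical all_reals all_analysis.
From mathcomp Require Import ring lra.
Import Order.TTheory GRing.Theory Num.Theory.
Import numFieldNormedType.Exports.
Local Open Scope classical_set_scope.
Local Open Scope ring_scope.

(* Let x be a point of Omega_rho(xi) where M_alpha G(x) > sigma lambda, witnessed
   by a radius r.  If r >= rho, then B_r(x) lies in B_3r(z), whose measure is at
   most 3^n |B_r(x)|, so the witnessing average is at most 3^n M_alpha G(z) <=
   3^n lambda < sigma lambda, which is absurd.  Hence r < rho, so B_r(x) lies in
   B_2rho(xi), where G and chi_{B_2rho(xi)} G agree: r also witnesses
   M_alpha (chi_{B_2rho(xi)} G)(x) > sigma lambda. *)

Section EuclideanNorm.
Context {R : realType} {n : nat}.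
Implicit Types (u v w : 'rV[R]_n) (c r s : R).

Lemma enorm_ge0 u : 0 <= enorm u.
Proof. exact: sqrtr_ge0. Qed.

Lemma enorm_sq u : enorm u ^+ 2 = \sum_(i < n) u ord0 i ^+ 2.
Proof. by rewrite sqr_sqrtr //; apply: sumr_ge0 => i _; exact: sqr_ge0. Qed.

Lemma enorm_eq0 u : enorm u = 0 -> u = 0.
Proof.
move=> /eqP; rewrite sqrtr_eq0 => sum_le0.
have sum_eq0 : \sum_(i < n) u ord0 i ^+ 2 = 0.
  by apply/eqP; rewrite eq_le sum_le0 sumr_ge0 // => i _; exact: sqr_ge0.
apply/rowP => i; rewrite mxE; apply/eqP; rewrite -sqrf_eq0.
by rewrite (psumr_eq0P (fun i _ => sqr_ge0 _) sum_eq0).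
Qed.

Lemma enormZ c u : enorm (c *: u) = `|c| * enorm u.
Proof.
rewrite /enorm; under eq_bigr do rewrite mxE exprMn.
by rewrite -mulr_sumr sqrtrM ?sqrtr_sqr // sqr_ge0.
Qed.

Lemma enormN u : enorm (- u) = enorm u.
Proof. by rewrite -scaleN1r enormZ normrN normr1 mul1r. Qed.

Lemma enormB u v : enorm (u - v) = enorm (v - u).
Proof. by rewrite -enormN opprB. Qed.

Lemma enorm_CauchySchwarz u v :
  \sum_(i < n) u ord0 i * v ord0 i <= enorm u * enorm v.
Proof.
have [-> | /eqP u_neq0] := eqVneq u 0.
  by rewrite big1 ?mulr_ge0 ?enorm_ge0 // => i _; rewrite mxE mul0r.
have [-> | /eqP v_neq0] := eqVneq v 0.
  by rewrite big1 ?mulr_ge0 ?enorm_ge0 // => i _; rewrite mxE mulr0.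
set A := enorm u; set B := enorm v.
have A_gt0 : 0 < A by rewrite lt0r enorm_ge0 andbT; apply/eqP => /enorm_eq0.
have B_gt0 : 0 < B by rewrite lt0r enorm_ge0 andbT; apply/eqP => /enorm_eq0.
have : 0 <= \sum_(i < n) (u ord0 i * B - v ord0 i * A) ^+ 2.
  by apply: sumr_ge0 => i _; exact: sqr_ge0.
have -> : \sum_(i < n) (u ord0 i * B - v ord0 i * A) ^+ 2 =
          2 * (A * B) * (A * B - \sum_(i < n) u ord0 i * v ord0 i).
  rewrite (eq_bigr (fun i => B ^+ 2 * u ord0 i ^+ 2 + A ^+ 2 * v ord0 i ^+ 2
                             - 2 * (A * B) * (u ord0 i * v ord0 i))); last first.
    by move=> i _; ring.
  by rewrite sumrB big_split /= -!mulr_sumr -!enorm_sq -/A -/B; ring.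
by rewrite pmulr_rge0 ?mulr_gt0 // subr_ge0.
Qed.

Lemma enormD u v : enorm (u + v) <= enorm u + enorm v.
Proof.
rewrite -ler_sqr ?nnegrE ?addr_ge0 ?enorm_ge0 // sqrrD !enorm_sq.
have -> : \sum_(i < n) (u + v) ord0 i ^+ 2 = \sum_(i < n) u ord0 i ^+ 2
    + 2 * \sum_(i < n) u ord0 i * v ord0 i + \sum_(i < n) v ord0 i ^+ 2.
  rewrite mulr_sumr -!big_split /=; apply: eq_bigr => i _; rewrite mxE; ring.
have := enorm_CauchySchwarz u v; lra.
Qed.

Lemma enormB_triangle u v w : enorm (u - w) <= enorm (u - v) + enorm (v - w).
Proof. by rewrite -[u - w](subrKA v); exact: enormD. Qed.

Lemma eball_subset u v r s : enorm (u - v) + r <= s -> eball u r `<=` eball v s.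
Proof.
move=> le_s w; rewrite /eball /= => w_near.
by apply: le_lt_trans (enormB_triangle w u v) _; lra.
Qed.

End EuclideanNorm.

Section OuterMeasure.
Context {R : realType} {n : nat}.
Local Open Scope ereal_scope.

Lemma boxvol_ge0 (a b : 'rV[R]_n) : (0 <= boxvol a b)%R.
Proof. by apply: prodr_ge0 => i _; rewrite le_max lexx orbT. Qed.

Lemma leb_ge0 (E : set 'rV[R]_n) : 0 <= leb E.
Proof.
apply: le_ereal_inf_tmp => _ [ab _ <-].
by apply: nneseries_ge0 => k _ _; rewrite lee_fin boxvol_ge0.
Qed.

Lemma leb_le (A B : set 'rV[R]_n) : A `<=` B -> leb A <= leb B.
Proof.
move=> AB; apply: ereal_inf_le_tmp => _ [ab Hab <-].
by exists ab => //= y /AB /Hab.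
Qed.

Section Homothety.
Variables (x z : 'rV[R]_n) (c : R).
Hypothesis c_gt0 : (0 < c)%R.

Let h (y : 'rV[R]_n) := (z + c *: (y - x))%R.

Lemma boxvol_homothety (a b : 'rV[R]_n) : boxvol (h a) (h b) = (c ^+ n * boxvol a b)%R.
Proof.
rewrite /boxvol -[n in (c ^+ n)%R]card_ord -prodr_const -big_split /=; apply: eq_bigr => i _.
rewrite !mxE (_ : _ - _ = c * (b ord0 i - a ord0 i))%R; last by ring.
by rewrite maxr_pMr ?ltW // mulr0.
Qed.

Lemma box_homothety (a b y : 'rV[R]_n) : box a b y -> box (h a) (h b) (h y).
Proof.
move=> aby i; have /andP[ay yb] := aby i; rewrite !mxE.
by rewrite lerD2l ltrD2l ler_pM2l ?ltr_pM2l // lerD2r ltrD2r ay.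
Qed.

Lemma leb_eball_homothety (r : R) :
  leb (eball z (c * r)) <= (c ^+ n)%:E * leb (eball x r).
Proof.
(* The image under [h] of a box cover of [eball x r] covers [eball z (c * r)]. *)
have cn_gt0 : (0 < c ^+ n)%R by rewrite exprn_gt0.
rewrite muleC -lee_pdivrMr //; apply: le_ereal_inf_tmp => _ [ab cover <-].
rewrite lee_pdivrMr // muleC -nneseriesZl => [|k _]; last by rewrite lee_fin boxvol_ge0.
under eq_eseriesr do rewrite -EFinM -boxvol_homothety.
apply: ereal_inf_lbound; exists (fun k => (h (ab k).1, h (ab k).2)) => //= y yB.
pose y' := (x + c^-1 *: (y - z))%R.
have -> : y = h y'.
  by rewrite /h /y' addrAC subrr add0r scalerA divff ?gt_eqF // scale1r addrC subrK.
have [|k _ y'k] := cover y'; last by exists k => //; exact: box_homothety.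
rewrite /eball /= /y' addrAC subrr add0r enormZ gtr0_norm ?invr_gt0 //.
by rewrite ltr_pdivrMl // mulrC; move: yB; rewrite /eball /= mulrC.
Qed.

End Homothety.
End OuterMeasure.

Section Averages.
Context {R : realType} {n : nat}.
Local Open Scope ereal_scope.
Implicit Types (E : set 'rV[R]_n) (f g : 'rV[R]_n -> R).

Lemma lint_ge0 E g : 0 <= lint E g.
Proof. by apply: integral_ge0 => t _; exact: leb_ge0. Qed.

Lemma lint_le E E' g g' :
  (forall t : R, (0 < t)%R ->
     [set x | E x /\ (t < g x)%R] `<=` [set x | E' x /\ (t < g' x)%R]) ->
  lint E g <= lint E' g'.
Proof.
move=> sub; rewrite /lint !ge0_integralE; try by move=> t _; exact: leb_ge0.
apply: ereal_sup_le => _ [h le_h <-]; exists h => //= t.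
apply: le_trans (le_h t) _; rewrite /patch; case: ifP => // /set_mem /=.
by rewrite in_itv /= andbT => /sub; exact: leb_le.
Qed.

Lemma lint_subset E E' g : E `<=` E' -> lint E g <= lint E' g.
Proof. by move=> EE'; apply: lint_le => t _ x [/EE']. Qed.

Lemma eq_lint E g g' : (forall x, E x -> g x = g' x) -> lint E g = lint E g'.
Proof.
by move=> eq_g; apply/eqP; rewrite eq_le !lint_le // => t _ x [Ex];
  rewrite /= eq_g.
Qed.

Definition lmean E g := lint E g * ((fine (leb E))^-1)%:E.

Lemma lmean_ge0 E g : 0 <= lmean E g.
Proof.
by apply: mule_ge0; rewrite ?lint_ge0 // lee_fin invr_ge0 fine_ge0 ?leb_ge0.
Qed.

Lemma lmean_le_subset E E' g (c : R) : (0 < c)%R -> E `<=` E' ->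
  leb E' <= c%:E * leb E -> lmean E g <= c%:E * lmean E' g.
Proof.
move=> c_gt0 EE' lebE'; rewrite /lmean.
(* [fine] sends an infinite measure to [0], so then the left mean is [0] too. *)
have [v_eq0|v_neq0] := eqVneq (fine (leb E)) 0%R.
  rewrite v_eq0 invr0 mule0; apply: mule_ge0 (lmean_ge0 _ _).
  by rewrite lee_fin ltW.
move: v_neq0 (leb_ge0 E) (leb_le _ _ EE') lebE'.
case: (leb E) => [v| |] /=; rewrite ?eqxx // => v_neq0; rewrite lee_fin => v_ge0.
have v_gt0 : (0 < v)%R by rewrite lt0r v_neq0.
case: (leb E') => [v'| |] //=; rewrite !lee_fin => v_le v'_le.
rewrite muleCA -EFinM; apply: lee_pmul; rewrite ?lint_ge0 ?lint_subset //.
  by rewrite lee_fin invr_ge0 ltW.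
have v'_gt0 : (0 < v')%R by apply: lt_le_trans v_le.
by rewrite lee_fin -[c]invrK -invfM lef_pV2 ?posrE ?mulr_gt0 ?invr_gt0 // ler_pdivrMl.
Qed.

End Averages.

Section FractionalMaximalFunction.
Context {R : realType} {n : nat}.
Local Open Scope ereal_scope.
Implicit Types (alpha r : R) (f g : 'rV[R]_n -> R) (x z : 'rV[R]_n).

Lemma Mfrac_ge alpha f x r : (0 < r)%R ->
  (r `^ alpha)%:E * ball_avg f x r <= Mfrac alpha f x.
Proof. by move=> r_gt0; apply: ereal_sup_ubound; exists r. Qed.

Lemma Mfrac_gtP alpha f x (t : \bar R) : t < Mfrac alpha f x ->
  exists2 r, (0 < r)%R & t < (r `^ alpha)%:E * ball_avg f x r.
Proof. by move=> /ereal_sup_gt[_ [r r_gt0 <-] t_lt]; exists r. Qed.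

Lemma eq_ball_avg f g x r : (forall y, eball x r y -> `|f y| = `|g y|)%R ->
  ball_avg f x r = ball_avg g x r.
Proof. by move=> eq_fg; congr (_ * _); exact: eq_lint. Qed.

Lemma ball_avg_le_homothety f x z r (c : R) : (0 < c)%R ->
  eball x r `<=` eball z (c * r) ->
  ball_avg f x r <= (c ^+ n)%:E * ball_avg f z (c * r).
Proof.
move=> c_gt0 sub; apply: lmean_le_subset => //; first by rewrite exprn_gt0.
exact: leb_eball_homothety.
Qed.

Lemma Mfrac_ge_homothety alpha f x z r (c : R) :
  (0 <= alpha)%R -> (1 <= c)%R -> (0 < r)%R -> eball x r `<=` eball z (c * r) ->
  (r `^ alpha)%:E * ball_avg f x r <= (c ^+ n)%:E * Mfrac alpha f z.
Proof.
move=> alpha_ge0 c_ge1 r_gt0 sub.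
have c_gt0 : (0 < c)%R by apply: lt_le_trans c_ge1.
have cr_gt0 : (0 < c * r)%R by rewrite mulr_gt0.
have cn_ge0 : 0 <= (c ^+ n)%:E by rewrite lee_fin exprn_ge0 ?ltW.
apply: le_trans (lee_wpmul2l cn_ge0 (Mfrac_ge alpha f z _ cr_gt0)).
rewrite [leRHS]muleCA; apply: lee_pmul; rewrite ?lee_fin ?powR_ge0 //.
- exact: lmean_ge0.
- apply: (ge0_ler_powR alpha_ge0);
    by rewrite ?nnegrE ?ler_peMl ?(ltW r_gt0) ?(ltW cr_gt0).
- exact: ball_avg_le_homothety.
Qed.

End FractionalMaximalFunction.

Theorem mainTheorem6 (R : realType) (n : nat) (Om : set 'rV[R]_n)
  (alpha : R) (G : 'rV[R]_n -> R) (lam rho : R) (xi z : 'rV[R]_n) :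
  (2 <= n)%N ->
  open Om ->
  0 <= alpha <= n%:R ->
  L1_nonneg Om G ->
  0 < lam -> 0 < rho -> Om xi ->
  oball Om xi rho z ->
  (Mfrac alpha G z <= lam%:E)%E ->
  forall sigma : R, (3 ^+ n)%:R < sigma ->
    (dfun alpha G (oball Om xi rho) (sigma * lam)
     <= dfun alpha (fun x => (\1_(eball xi (2 * rho)) x * G x)%R)
             (oball Om xi rho) (sigma * lam))%E.
Proof.
move=> _ _ /andP[alpha_ge0 _] _ lam_gt0 rho_gt0 _ [z_near _] Mz_le sigma sigma_gt.
apply: leb_le => x [[x_near Om_x] /Mfrac_gtP[r r_gt0 avg_gt]]; split=> //.
have [rho_le_r | r_lt_rho] := leP rho r.
  have sub3 : eball x r `<=` eball z (3 * r).
    apply: eball_subset; have := enormB_triangle x xi z.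
    by move: x_near z_near; rewrite /eball /= (enormB xi); lra.
  have avg_le : ((r `^ alpha)%:E * ball_avg G x r <= (3 ^+ n * lam)%:E)%E.
    apply: le_trans (Mfrac_ge_homothety alpha G x z r 3 alpha_ge0 _ r_gt0 sub3) _.
      by rewrite ler1n.
    by rewrite EFinM lee_wpmul2l // lee_fin exprn_ge0.
  have := lt_le_trans avg_gt avg_le.
  by rewrite lte_fin ltr_pM2r // ltNge -natrX ltW.
have sub : eball x r `<=` eball xi (2 * rho).
  by apply: eball_subset; move: x_near; rewrite /eball /=; lra.
apply: lt_le_trans avg_gt _.
have -> : ball_avg G x r = ball_avg (fun y => \1_(eball xi (2 * rho)) y * G y) x r.
  by apply: eq_ball_avg => y /sub xi_y; rewrite indicE mem_set // mul1r.
exact: Mfrac_ge.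
Qed.
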